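(* Let $0<\eta<\frac1L$ and let $\{(X^k,X_0^k;Y^k,Z^k)\}_{k\ge0}$ be generated by ADAPD-OG (defined in the context). Then for all $k\ge0$, $$\mathcal L_\eta(X^{k+1},X_0^k;Y^k,Z^k)-\mathcal L_\eta(X^k,X_0^k;Y^k,Z^k)\le\frac{L\eta-1}{2\eta}\|X^{k+1}-X^k\|_F^2.$$
   Context: Notation: $\langle A,B\rangle=\sum_{i,j}a_{ij}b_{ij}$, $\|\cdot\|_F$ Frobenius norm, $e\in\mathbb R^N$ all-ones vector. Mixing matrix $W\in\mathbb R^{N\times N}$ of an undirected graph $\mathcal G=(\{1,\dots,N\},\mathcal E)$ with (i) $w_{ij}>0$ if $(i,j)\in\mathcal E$, $w_{ij}=0$ otherwise; (ii) $W=W^\top$; (iii) $\mathrm{null}(I-W)=\mathrm{span}\{e\}$; (iv) $-1<\lambda_N(W)\le\dots\le\lambda_2(W)<\lambda_1(W)=1$. $\sqrt{I-W}$ is the PSD square root of $I-W$. $f_i:\mathbb R^p\to\mathbb R$ differentiable; $F(X)=\frac1N\sum_if_i(x_i)$ for $X$ with rows $x_i^\top$, gradient $\nabla F(X)$ with rows $\frac1N\nabla f_i(x_i)^\top$; $\|\nabla F(X)-\nabla F(X')\|_F\le L\|X-X'\|_F$ for all $X,X'$, $0<L<\infty$. Augmented Lagrangian: $\mathcal L_\eta(X,X_0;Y,Z)=F(X)+\langle Y,X-X_0\rangle+\frac1{2\eta}\|X-X_0\|_F^2+\langle Z,\sqrt{I-W}X_0\rangle+\frac1{2\eta}\|\sqrt{I-W}X_0\|_F^2$.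 ADAPD-OG: fix $\eta>0$; arbitrary $X^0,X_0^0,Y^0$, $Z^0\in\mathrm{range}(\sqrt{I-W})$; for $k\ge0$: $X^{k+1}=X_0^k-\eta(\nabla F(X^k)+Y^k)$, $X_0^{k+1}=\frac12(WX_0^k+X^{k+1}+\eta(Y^k-\sqrt{I-W}Z^k))$, $Y^{k+1}=Y^k+\frac1\eta(X^{k+1}-X_0^{k+1})$, $Z^{k+1}=Z^k+\frac1\eta\sqrt{I-W}X_0^{k+1}$. *)

From HB Require Import structures.
From mathcomp Require Import all_boot all_order all_algebra.
From mathcomp Require Import all_classical all_reals all_analysis.
Set Implicit Arguments. Unset Strict Implicit. Unset Printing Implicit Defensive.
Import Order.TTheory GRing.Theory Num.Theory.
Local Open Scope ring_scope.

Section Defs.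
Variable R : realType.

Definition frob_inner (m n : nat) (A B : 'M[R]_(m, n)) : R :=
  \sum_(i < m) \sum_(j < n) A i j * B i j.

Definition frob_norm (m n : nat) (A : 'M[R]_(m, n)) : R :=
  Num.sqrt (frob_inner A A).

Definition ones (N : nat) : 'cV[R]_N := const_mx 1.

Definition is_psd_sqrt (N : nat) (S A : 'M[R]_N) : Prop :=
  S^T = S /\ (forall x : 'cV[R]_N, 0 <= (x^T *m S *m x) 0 0) /\ S *m S = A.

Definition mixing_matrix (N : nat) (E : rel 'I_N) (W : 'M[R]_N) : Prop :=
  (forall i j, E i j = E j i) /\
  (forall i j, (E i j -> 0 < W i j) /\ (~~ E i j -> W i j = 0)) /\
  W^T = W /\
  (forall x : 'cV[R]_N,
     (1%:M - W) *m x = 0 <-> exists c : R, x = c *: ones N) /\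
  (forall a : R, eigenvalue W a -> -1 < a /\ a <= 1) /\
  eigenvalue W 1.

Definition Fsum (N p : nat) (f : 'I_N -> 'rV[R]_p -> R) (X : 'M[R]_(N, p)) : R :=
  N%:R^-1 * \sum_(i < N) f i (row i X).

Definition gradF (N p : nat) (gf : 'I_N -> 'rV[R]_p -> 'rV[R]_p)
  (X : 'M[R]_(N, p)) : 'M[R]_(N, p) :=
  \matrix_(i < N, j < p) (N%:R^-1 * gf i (row i X) 0 j).

Definition is_gradient (p : nat) (f : 'rV[R]_p -> R) (g : 'rV[R]_p -> 'rV[R]_p) : Prop :=
  forall x, differentiable f x /\
            forall v : 'rV[R]_p, 'd f x v = \sum_(j < p) g x 0 j * v 0 j.

Definition aug_lag (N p : nat) (f : 'I_N -> 'rV[R]_p -> R) (S : 'M[R]_N) (eta : R)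
  (X X0 Y Z : 'M[R]_(N, p)) : R :=
  Fsum f X + frob_inner Y (X - X0) + (2 * eta)^-1 * frob_norm (X - X0) ^+ 2
  + frob_inner Z (S *m X0) + (2 * eta)^-1 * frob_norm (S *m X0) ^+ 2.

End Defs.

(* With X' := X0 - eta (grad F(X) + Y), only the F term and the terms in X - X0 of the
   augmented Lagrangian change.  The descent lemma
   F(X') <= F(X) + <grad F(X), X' - X> + L/2 |X' - X|^2 follows from the mean value theorem
   along the segment [X, X'] and the Lipschitz bound on grad F.  Since
   eta (grad F(X) + Y) = X0 - X', the identity |a|^2 - |b|^2 = 2 <a, a - b> - |a - b|^2
   turns the remaining linear and quadratic terms into exactly -|X' - X|^2 / (2 eta). *)

From HB Require Import structures.
From mathcomp Require Import all_boot all_order all_algebra.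
From mathcomp Require Import all_classical all_reals all_analysis.
From mathcomp Require Import ring lra.
Set Implicit Arguments. Unset Strict Implicit. Unset Printing Implicit Defensive.
Import Order.TTheory GRing.Theory Num.Theory numFieldNormedType.Exports.
Local Open Scope ring_scope.

Section FrobeniusInner.
Variables (R : realType) (m n : nat).
Implicit Types (A B C : 'M[R]_(m, n)).

Lemma frob_inner_self_ge0 A : 0 <= frob_inner A A.
Proof. by apply: sumr_ge0 => i _; apply: sumr_ge0 => j _; rewrite -expr2 sqr_ge0. Qed.

Lemma frob_norm_ge0 A : 0 <= frob_norm A.
Proof. exact: sqrtr_ge0. Qed.

Lemma sqr_frob_norm A : frob_norm A ^+ 2 = frob_inner A A.
Proof. by rewrite sqr_sqrtr // frob_inner_self_ge0. Qed.

Lemma frob_innerBl A B C : frob_inner (A - B) C = frob_inner A C - frob_inner B C.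
Proof.
rewrite /frob_inner -sumrB; apply: eq_bigr => i _; rewrite -sumrB.
by apply: eq_bigr => j _; rewrite !mxE mulrBl.
Qed.

Lemma frob_innerZZ (c : R) A : frob_inner (c *: A) (c *: A) = c ^+ 2 * frob_inner A A.
Proof.
rewrite /frob_inner mulr_sumr; apply: eq_bigr => i _; rewrite mulr_sumr.
by apply: eq_bigr => j _; rewrite !mxE; ring.
Qed.

Lemma frob_normZ (c : R) A : frob_norm (c *: A) = `|c| * frob_norm A.
Proof. by rewrite /frob_norm frob_innerZZ sqrtrM ?sqr_ge0 // sqrtr_sqr. Qed.

Lemma frob_inner_le_amgm A B {s : R} : 0 < s ->
  frob_inner A B <= (2 * s)^-1 * frob_inner A A + s / 2 * frob_inner B B.
Proof.
move=> s_gt0; rewrite /frob_inner !mulr_sumr -big_split; apply: ler_sum => i _.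
rewrite !mulr_sumr -big_split; apply: ler_sum => j _; rewrite -subr_ge0.
have -> : (2 * s)^-1 * (A i j * A i j) + s / 2 * (B i j * B i j) - A i j * B i j
          = (A i j - s * B i j) ^+ 2 / (2 * s) by field; rewrite gt_eqF.
by rewrite divr_ge0 ?sqr_ge0 // mulr_ge0 // ltW.
Qed.

Lemma frob_inner_le_of_norm_le A B (K : R) : 0 < K ->
  frob_norm A <= K * frob_norm B -> frob_inner A B <= K * frob_norm B ^+ 2.
Proof.
move=> K_gt0 AB; apply: le_trans (frob_inner_le_amgm A B K_gt0) _.
have AA : frob_inner A A <= K ^+ 2 * frob_inner B B.
  rewrite -!sqr_frob_norm -exprMn.
  by rewrite ler_pXn2r ?nnegrE ?frob_norm_ge0 // mulr_ge0 ?frob_norm_ge0 ?ltW.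
rewrite sqr_frob_norm.
have -> : K * frob_inner B B = (2 * K)^-1 * (K ^+ 2 * frob_inner B B) + K / 2 * frob_inner B B.
  by field; rewrite gt_eqF.
by rewrite lerD2r ler_wpM2l // invr_ge0 mulr_ge0 // ltW.
Qed.

End FrobeniusInner.

Lemma is_derive_line (R : numFieldType) (V W : normedModType R) (f : V -> W)
    (x v : V) (t : R) (df : W) :
  is_derive (x + t *: v) v f df -> is_derive t 1 (fun s => f (x + s *: v)) df.
Proof.
have quotientE : (fun h : R => h^-1 *: ((fun s => f (x + s *: v)) (shift t (h *: 1))
                                         - f (x + t *: v)))
               = (fun h => h^-1 *: (f (shift (x + t *: v) (h *: v)) - f (x + t *: v))).
  by apply: funext => h; rewrite /shift /= scaler1 scalerDl addrCA addrA.
by case; rewrite /derivable /derive -quotientE => ? ?; exact: DeriveDef.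
Qed.

Lemma is_derive_gradient (R : realType) (p : nat) (f : 'rV[R]_p -> R)
    (g : 'rV[R]_p -> 'rV[R]_p) (x v : 'rV[R]_p) :
  is_gradient f g -> is_derive x v f (\sum_(j < p) g x 0 j * v 0 j).
Proof.
move=> /(_ x) [f_diff dfE]; apply: DeriveDef; first exact: diff_derivable.
by rewrite deriveE.
Qed.

Lemma is_derive_Fsum_line (R : realType) (N p : nat) (f : 'I_N -> 'rV[R]_p -> R)
    (gf : 'I_N -> 'rV[R]_p -> 'rV[R]_p) (A D : 'M[R]_(N, p)) (t : R) :
  (forall i, is_gradient (f i) (gf i)) ->
  is_derive t 1 (fun s => Fsum f (A + s *: D)) (frob_inner (gradF gf (A + t *: D)) D).
Proof.
move=> f_grad.
have -> : (fun s => Fsum f (A + s *: D)) =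
          N%:R^-1 \*: \sum_(i < N) (fun s => f i (row i A + s *: row i D)).
  apply: funext => s; rewrite /Fsum fct_sumE; congr (_ * _).
  by apply: eq_bigr => i _; rewrite linearD linearZ.
apply: is_derive_eq.
  by apply/is_deriveZ/is_derive_sum => i; apply/is_derive_line/is_derive_gradient.
rewrite /frob_inner /GRing.scale /= mulr_sumr; apply: eq_bigr => i _.
rewrite mulr_sumr; apply: eq_bigr => j _.
by rewrite !mxE mulrA linearD linearZ.
Qed.

Lemma descent_lemma (R : realType) (m n : nat) (F : 'M[R]_(m, n) -> R)
    (G : 'M[R]_(m, n) -> 'M[R]_(m, n)) (L : R) (A D : 'M[R]_(m, n)) :
  (forall t : R, is_derive t 1 (fun s => F (A + s *: D)) (frob_inner (G (A + t *: D)) D)) ->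
  0 < L -> (forall B, frob_norm (G B - G A) <= L * frob_norm (B - A)) ->
  F (A + D) <= F A + frob_inner (G A) D + L / 2 * frob_norm D ^+ 2.
Proof.
move=> F_der L_gt0 G_lip.
set c := frob_inner (G A) D; set q := L / 2 * frob_norm D ^+ 2.
pose h s := F (A + s *: D) - s * c - s ^+ 2 * q.
pose dh t := frob_inner (G (A + t *: D)) D - c - (t *+ 2) * q.
(* The Lipschitz bound makes [dh] nonpositive on ]0, 1[, so the MVT gives [h 1 <= h 0]. *)
have h_der (t : R) : is_derive t 1 h (dh t).
  by apply: is_derive_eq; rewrite /dh !scaler0 !add0r !scaler1 mulr2n mulrC.
have h_cont : {within `[0, 1], continuous h}%classic.
  by apply: derivable_within_continuous.
have [t /[!in_itv] /= /andP[t_gt0 _] h10] := MVT ltr01 (fun t _ => h_der t) h_cont.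
have dh_le0 : dh t <= 0.
  have G_step : frob_norm (G (A + t *: D) - G A) <= L * t * frob_norm D.
    by have := G_lip (A + t *: D); rewrite addrAC subrr add0r frob_normZ gtr0_norm ?mulrA.
  have := frob_inner_le_of_norm_le (mulr_gt0 L_gt0 t_gt0) G_step.
  rewrite /dh /c -frob_innerBl /q; lra.
have h1 : h 1 = F (A + D) - c - q by rewrite /h scale1r mul1r expr1n mul1r.
have h0 : h 0 = F A by rewrite /h scale0r addr0 mul0r expr0n mul0r !subr0.
by move: h10; rewrite h1 h0 subr0 mulr1; lra.
Qed.

Lemma proximal_step_identity (R : realType) (m n : nat) (X X1 X0 G Y : 'M[R]_(m, n))
    (eta : R) :
  eta != 0 -> X1 = X0 - eta *: (G + Y) ->
  frob_inner G (X1 - X)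
    + (frob_inner Y (X1 - X0) + (2 * eta)^-1 * frob_norm (X1 - X0) ^+ 2)
    - (frob_inner Y (X - X0) + (2 * eta)^-1 * frob_norm (X - X0) ^+ 2)
  = - ((2 * eta)^-1 * frob_norm (X1 - X) ^+ 2).
Proof.
move=> eta_neq0 ->; rewrite !sqr_frob_norm /frob_inner !mulr_sumr -!sumrN.
rewrite -!big_split -!sumrB; apply: eq_bigr => i _.
rewrite !mulr_sumr -!sumrN -!big_split -!sumrB; apply: eq_bigr => j _.
by rewrite !mxE /=; field.
Qed.

Theorem lemma10 (R : realType) (N p : nat) (E : rel 'I_N) (W S : 'M[R]_N)
  (f : 'I_N -> 'rV[R]_p -> R) (gf : 'I_N -> 'rV[R]_p -> 'rV[R]_p) (L eta : R)
  (X X0 Y Z : nat -> 'M[R]_(N, p)) :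
  mixing_matrix E W ->
  is_psd_sqrt S (1%:M - W) ->
  (forall i, is_gradient (f i) (gf i)) ->
  0 < L ->
  (forall A B : 'M[R]_(N, p),
     frob_norm (gradF gf A - gradF gf B) <= L * frob_norm (A - B)) ->
  0 < eta -> eta < L^-1 ->
  (exists M : 'M[R]_(N, p), Z 0%N = S *m M) ->
  (forall k : nat, X k.+1 = X0 k - eta *: (gradF gf (X k) + Y k)) ->
  (forall k : nat, X0 k.+1 =
     2^-1 *: (W *m X0 k + X k.+1 + eta *: (Y k - S *m Z k))) ->
  (forall k : nat, Y k.+1 = Y k + eta^-1 *: (X k.+1 - X0 k.+1)) ->
  (forall k : nat, Z k.+1 = Z k + eta^-1 *: (S *m X0 k.+1)) ->
  forall k : nat,
    aug_lag f S eta (X k.+1) (X0 k) (Y k) (Z k)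
      - aug_lag f S eta (X k) (X0 k) (Y k) (Z k)
    <= (L * eta - 1) / (2 * eta) * frob_norm (X k.+1 - X k) ^+ 2.
Proof.
(* Both Lagrangian values share X0 k, Y k, Z k: only the X-update matters. *)
move=> _ _ f_grad L_gt0 G_lip eta_gt0 _ _ X_step _ _ _ k.
have descent := descent_lemma
  (fun t => is_derive_Fsum_line (X k) (X k.+1 - X k) t f_grad) L_gt0 (G_lip^~ (X k)).
rewrite [X k + _]addrC subrK in descent.
have step := proximal_step_identity (X k) (lt0r_neq0 eta_gt0) (X_step k).
have -> : (L * eta - 1) / (2 * eta) = L / 2 - (2 * eta)^-1 by field; rewrite lt0r_neq0.
rewrite /aug_lag; lra.
Qed.
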